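(* Let $\mathcal{H}\neq0$ and $\mathcal{K}$ be Hilbert spaces, $(a_i)_{i\in I}$ an orthonormal basis of $\mathcal{H}$, and $S\in\mathcal{C}(\mathcal{H}\otimes\mathcal{K})$. Then $\exists_\mathcal{H}S=\mathcal{H}\otimes S^\mathcal{H}$. In particular $S^\mathcal{H}$ does not depend on the choice of orthonormal basis of $\mathcal{H}$.
   Context: $\mathcal{C}(\mathcal{H})$ is the orthomodular lattice of closed subspaces of a Hilbert space. $\langle T\rangle$ denotes the closed linear span of a set $T$. For closed subspaces $A\le\mathcal{H}$, $B\le\mathcal{K}$, $A\otimes B$ is the closed subspace of $\mathcal{H}\otimes\mathcal{K}$ generated by all $a\otimes b$. $\mathcal{H}\otimes\mathcal{C}(\mathcal{K})=\{\mathcal{H}\otimes B:B\in\mathcal{C}(\mathcal{K})\}$, a complete sub-ortholattice of $\mathcal{C}(\mathcal{H}\otimes\mathcal{K})$; $\exists_\mathcal{H}S$ is the smallest element of $\mathcal{H}\otimes\mathcal{C}(\mathcal{K})$ containing $S$. Each $v\in\mathcal{H}\otimes\mathcal{K}$ is uniquely $v=\sum_{i\in I}a_i\otimes v_i$ with $v_i\in\mathcal{K}$, and $S^\mathcal{H}=\langle v_i: v\in S,\ i\in I\rangle$. *)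

From HB Require Import structures.
From mathcomp Require Import all_boot all_order all_algebra.
From mathcomp Require Import finmap.
From mathcomp Require Import all_classical all_reals all_analysis.
From mathcomp Require Import complex.
Set Implicit Arguments. Unset Strict Implicit. Unset Printing Implicit Defensive.
Import Order.TTheory GRing.Theory Num.Theory.
Import numFieldNormedType.Exports.
Local Open Scope classical_set_scope.
Local Open Scope ring_scope.

Definition totally {I : choiceType} : set_system {fset I} :=
  filter_from setT (fun A => [set B | (A `<=` B)%fset]).

Definition partial_sum {I : choiceType} {V : zmodType}
  (x : I -> V) (A : {fset I}) : V := \sum_(i : A) x (val i).

(* [has_sum x v] : the net of finite partial sums of x converges to v,
   i.e. v = \sum_{i \in I} x i (unconditional sum). *)
Definition has_sum {I : choiceType} {K : numFieldType} {V : normedModType K}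
  (x : I -> V) (v : V) : Prop :=
  partial_sum x @ totally --> v.

Section Hilbert.
Variable R : realType.
Local Notation C := R[i].

(* A complete normed space H over C together with an inner product inducing
   its norm: this is a complex Hilbert space. *)
Definition is_inner_product (H : completeNormedModType C) (ip : H -> H -> C) :=
  [/\ (forall y, forall a x1 x2, ip (a *: x1 + x2) y = a * ip x1 y + ip x2 y),
      (forall x y, ip y x = (ip x y)^*)%C &
      (forall x, ip x x = `|x| ^+ 2)].

Definition closed_subspace {V : normedModType C} (M : set V) : Prop :=
  [/\ M 0, (forall x y, M x -> M y -> M (x + y)),
      (forall (a : C) x, M x -> M (a *: x)) & closed M].

Definition clspan {V : normedModType C} (T : set V) : set V :=
  \bigcap_(M in [set M : set V | closed_subspace M /\ T `<=` M]) M.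

Definition orthonormal_basis (H : completeNormedModType C) (ip : H -> H -> C)
  (I : choiceType) (a : I -> H) : Prop :=
  [/\ (forall i, ip (a i) (a i) = 1),
      (forall i j, i <> j -> ip (a i) (a j) = 0) &
      clspan (range a) = setT].

(* This determines H (x) K up to unitary isomorphism. *)
Definition is_tensor_product (H K T : completeNormedModType C)
  (ipH : H -> H -> C) (ipK : K -> K -> C) (ipT : T -> T -> C)
  (tens : H -> K -> T) : Prop :=
  [/\ is_inner_product ipT,
      (forall b (c : C) a1 a2, tens (c *: a1 + a2) b = c *: tens a1 b + tens a2 b),
      (forall a (c : C) b1 b2, tens a (c *: b1 + b2) = c *: tens a b1 + tens a b2),
      (forall a b c d, ipT (tens a b) (tens c d) = ipH a c * ipK b d) &
      clspan [set t | exists a b, t = tens a b] = setT].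

Section Tensor.
Variables (H K T : completeNormedModType C) (tens : H -> K -> T).

Definition tensS (A : set H) (B : set K) : set T :=
  clspan [set t | exists a b, [/\ A a, B b & t = tens a b]].

Definition in_HtensCK (E : set T) : Prop :=
  exists B : set K, closed_subspace B /\ E = tensS setT B.

(* exists_H S : smallest element of H (x) C(K) containing S, realized as the
   meet (intersection) of all elements of H (x) C(K) containing S
   (H (x) C(K) is a complete sub-ortholattice). *)
Definition existsH (S : set T) : set T :=
  \bigcap_(E in [set E | in_HtensCK E /\ S `<=` E]) E.

(* S^H w.r.t. the orthonormal basis a: writing v = sum_i a_i (x) v_i,
   S^H = < v_i : v in S, i in I >. *)
Definition coeffs (I : choiceType) (a : I -> H) (v : T) (w : I -> K) : Prop :=
  has_sum (fun i => tens (a i) (w i)) v.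

Definition supH (I : choiceType) (a : I -> H) (S : set T) : set K :=
  clspan [set x | exists v w i, [/\ S v, coeffs a v w & x = w i]].

End Tensor.
End Hilbert.

From HB Require Import structures.
From mathcomp Require Import all_boot all_order all_algebra.
From mathcomp Require Import finmap.
From mathcomp Require Import all_classical all_reals all_analysis.
From mathcomp Require Import complex.
From mathcomp Require Import ring.
Import Order.TTheory GRing.Theory Num.Theory.
Import numFieldNormedType.Exports.
Local Open Scope classical_set_scope.
Local Open Scope ring_scope.
Set Implicit Arguments. Unset Strict Implicit. Unset Printing Implicit Defensive.

(* The i-th coefficient of t in H (x) K is the vector [coef i t] of K that
   represents k |-> <t, a_i (x) k>.  With no Riesz theorem at hand, its
   existence is proved directly: the t admitting a representative form a closed
   subspace (K is complete and representatives are 1-Lipschitz in t) containing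
   every elementary tensor.  The maps t |-> a_i (x) coef i t are pairwise
   orthogonal projections, so by Bessel's inequality the t that are the sum of
   their projections form a closed subspace; it contains the elementary tensors
   because (a_i) is a basis of H.  Hence t = sum_i a_i (x) coef i t, and H (x) B
   contains t iff B contains every coefficient of t: this is
   exists_H S = H (x) S^H.  Since coef i (h (x) b) = <h, a_i> b and some
   <h, a_i> is nonzero when h <> 0, the map B |-> H (x) B is injective, so S^H
   does not depend on the basis. *)

(* R[i] as a normed module over itself, so that inner products are maps
   between normed R[i]-modules. *)
HB.instance Definition _ (R : rcfType) :=
  NormedModule.copy (complex R) (complex R)^o.

Lemma morph_add0 (U W : zmodType) (f : U -> W) :
  {morph f : x y / x + y} -> f 0 = 0.
Proof. by move=> fD; apply: (addrI (f 0)); rewrite -fD !addr0. Qed.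

Section InnerProduct.
Variable R : realType.
Local Notation C := R[i].
Variables (V : completeNormedModType C) (ip : V -> V -> C).
Hypothesis hV : is_inner_product ip.

Lemma ipDZl a x y z : ip (a *: x + y) z = a * ip x z + ip y z.
Proof. by case: hV. Qed.

Lemma ipC x y : ip y x = (ip x y)^*.
Proof. by case: hV. Qed.

Lemma ip_normE x : ip x x = `|x| ^+ 2.
Proof. by case: hV. Qed.

Lemma ipDl x y z : ip (x + y) z = ip x z + ip y z.
Proof. by rewrite -[x]scale1r ipDZl mul1r scale1r. Qed.

Lemma ip0l z : ip 0 z = 0.
Proof. exact: (morph_add0 (fun x y => ipDl x y z)). Qed.

Lemma ipZl a x z : ip (a *: x) z = a * ip x z.
Proof. by rewrite -[a *: x]addr0 ipDZl ip0l addr0. Qed.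

Lemma ipBl x y z : ip (x - y) z = ip x z - ip y z.
Proof. by rewrite ipDl -scaleN1r ipZl mulN1r. Qed.

Lemma ipDr x y z : ip x (y + z) = ip x y + ip x z.
Proof. by rewrite ipC ipDl rmorphD (ipC y x) (ipC z x). Qed.

Lemma ip0r z : ip z 0 = 0.
Proof. by rewrite ipC ip0l rmorph0. Qed.

Lemma ipZr a x z : ip z (a *: x) = a^* * ip z x.
Proof. by rewrite ipC ipZl rmorphM (ipC x z). Qed.

Lemma ip_suml (J : Type) (r : seq J) (P : pred J) (F : J -> V) z :
  ip (\sum_(j <- r | P j) F j) z = \sum_(j <- r | P j) ip (F j) z.
Proof. exact: (big_morph (ip^~ z) (fun x y => ipDl x y z) (ip0l z)). Qed.

Lemma ip_sumr (J : Type) (r : seq J) (P : pred J) (F : J -> V) z :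
  ip z (\sum_(j <- r | P j) F j) = \sum_(j <- r | P j) ip z (F j).
Proof. exact: (big_morph (ip z) (ipDr z) (ip0r z)). Qed.

Lemma ip_self_eq0 x : ip x x = 0 -> x = 0.
Proof. by rewrite ip_normE => /eqP; rewrite expf_eq0 /= normr_eq0 => /eqP. Qed.

Lemma ip_injl x y : (forall k, ip x k = ip y k) -> x = y.
Proof.
by move=> xy; apply/eqP; rewrite -subr_eq0; apply/eqP/ip_self_eq0; rewrite ipBl xy subrr.
Qed.

Lemma pythagoras u w : ip u w = 0 -> `|u + w| ^+ 2 = `|u| ^+ 2 + `|w| ^+ 2.
Proof.
move=> uw; have wu : ip w u = 0 by rewrite ipC uw rmorph0.
by rewrite -!ip_normE ipDl !ipDr uw wu addr0 add0r.
Qed.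

Lemma cauchy_schwarz x y : `|ip x y| <= `|x| * `|y|.
Proof.
have [->|y0] := eqVneq y 0; first by rewrite ip0r !normr0 mulr0.
have yy0 : ip y y != 0 by apply: contra_neq y0; apply: ip_self_eq0.
have ny0 : 0 < `|y| by rewrite normr_gt0.
set t := ip x y / ip y y.
(* [x = (x - t y) + t y] is an orthogonal decomposition *)
have orth : ip (x - t *: y) (t *: y) = 0.
  by rewrite ipBl !ipZr ipZl /t -(mulrA (ip x y)) mulVf // mulr1 subrr.
have : `|t *: y| <= `|x|.
  by rewrite -ler_sqr ?nnegrE // -[x](subrK (t *: y)) pythagoras // lerDr exprn_ge0.
rewrite normrZ /t normrM normfV ip_normE normrX normr_id.
by rewrite expr2 invfM mulrA mulfVK ?gt_eqF // ler_pdivrMr.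
Qed.

End InnerProduct.

Section Topology.
Variable R : realType.
Local Notation C := R[i].

Lemma lipschitz_continuous (V W : normedModType C) (f : V -> W) (c : C) :
  0 <= c -> (forall x y, `|f x - f y| <= c * `|x - y|) -> continuous f.
Proof.
move=> c0 fc x; apply/cvgrPdist_lt => e e0.
have c1 : 0 < c + 1 by rewrite ltr_wpDl.
near=> y; apply: (le_lt_trans (fc x y)).
rewrite (@le_lt_trans _ _ ((c + 1) * `|x - y|)) ?ler_wpM2r ?lerDl //.
rewrite -ltr_pdivlMl // mulrC; near: y.
by apply: cvgr_dist_lt; rewrite ?divr_gt0.
Unshelve. all: by end_near. Qed.

Lemma ipl_continuous (V : completeNormedModType C) (ip : V -> V -> C) :
  is_inner_product ip -> forall z, continuous (ip^~ z).
Proof.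
move=> hV z; apply: (lipschitz_continuous (c := `|z|)) => // x y.
by rewrite -(ipBl hV) mulrC cauchy_schwarz.
Qed.

Global Instance totally_filter (I : choiceType) : ProperFilter (@totally I).
Proof.
apply: filter_from_proper => [|A _]; last by exists A => /=.
apply: filter_from_filter => [|A B _ _]; first by exists fset0%fset.
exists (A `|` B)%fset => // D /= AB_D.
by split; apply: fsubset_trans AB_D; rewrite ?fsubsetUl ?fsubsetUr.
Qed.


Lemma near_totally_in (I : choiceType) (j : I) :
  \forall A \near (@totally I), j \in A.
Proof. by exists [fset j]%fset => // A /= /fsubsetP; apply; rewrite inE. Qed.

Lemma has_sum_single (I : choiceType) (V : normedModType C) (f : I -> V) j :
  (forall i, i <> j -> f i = 0) -> has_sum f (f j).
Proof.
move=> fj; apply: cvg_near_cst; apply: filterS (near_totally_in j) => A jA.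
rewrite /partial_sum (bigD1 [` jA]%fset) //= big1 ?addr0 // => i ij.
by rewrite fj // => e; rewrite -(inj_eq val_inj) /= e eqxx in ij.
Qed.

End Topology.
Arguments ipl_continuous {R V ip} hV z.

Section ClosedSpan.
Variable R : realType.
Variable V : normedModType R[i].

Lemma clspan_min (X M : set V) : closed_subspace M -> X `<=` M -> clspan X `<=` M.
Proof. by move=> hM XM x; apply. Qed.

Lemma sub_clspan (X : set V) : X `<=` clspan X.
Proof. by move=> x Xx M [_]; apply. Qed.

Lemma closed_subspace_clspan (X : set V) : closed_subspace (clspan X).
Proof.
split=> [M [[]] //|x y Xx Xy M hM|c x Xx M hM|].
- by case: (hM) => -[_ MD _ _] _; apply: MD; [apply: Xx | apply: Xy].
- by case: (hM) => -[_ _ MZ _] _; apply: MZ; apply: Xx.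
- by apply: closed_bigI => M [[]].
Qed.

Lemma clspan_mono (X Y : set V) : X `<=` Y -> clspan X `<=` clspan Y.
Proof.
move=> XY; apply: clspan_min; first exact: closed_subspace_clspan.
by move=> x /XY; apply: sub_clspan.
Qed.

Lemma closed_subspace_sum (M : set V) (J : Type) (r : seq J) (P : pred J)
    (F : J -> V) :
  closed_subspace M -> (forall j, P j -> M (F j)) -> M (\sum_(j <- r | P j) F j).
Proof. by case=> M0 MD _ _ MF; apply: big_ind. Qed.

End ClosedSpan.

Section OrthogonalExpansion.
Variable R : realType.
Local Notation C := R[i].
Variables (V : completeNormedModType C) (ip : V -> V -> C).
Hypothesis hV : is_inner_product ip.
Variables (I : choiceType) (Q : I -> V -> V).
Hypothesis QDZ : forall i c x y, Q i (c *: x + y) = c *: Q i x + Q i y.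
Hypothesis Q_orth : forall i j x y, i <> j -> ip (Q i x) (Q j y) = 0.
Hypothesis Q_proj : forall j x y, ip x (Q j y) = ip (Q j x) (Q j y).

Local Notation P A x := (partial_sum (fun i => Q i x) A).

Lemma proj_sumDZ A c x y : P A (c *: x + y) = c *: P A x + P A y.
Proof.
by rewrite /partial_sum (eq_bigr _ (fun i _ => QDZ _ _ _ _)) big_split -scaler_sumr.
Qed.

Lemma proj_sumD A x y : P A (x + y) = P A x + P A y.
Proof. by rewrite -[x]scale1r proj_sumDZ !scale1r. Qed.

Lemma proj_sum0 A : P A 0 = 0.
Proof. exact: (morph_add0 (proj_sumD A)). Qed.

Lemma proj_sumZ A c x : P A (c *: x) = c *: P A x.
Proof. by rewrite -[c *: x]addr0 proj_sumDZ proj_sum0 addr0. Qed.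

Lemma proj_sumB A x y : P A (x - y) = P A x - P A y.
Proof. by rewrite proj_sumD -scaleN1r proj_sumZ scaleN1r. Qed.

Lemma ip_sub_proj_sum A x : ip (x - P A x) (P A x) = 0.
Proof.
rewrite (ipBl hV) /partial_sum (ip_sumr hV) (ip_suml hV).
under [X in _ - X]eq_bigr => j _.
  rewrite (ip_sumr hV) (bigD1 j) //= big1 ?addr0 -?Q_proj; first over.
  move=> i ij; rewrite (ipC hV) Q_orth ?rmorph0 // => /val_inj ij'.
  by rewrite ij' eqxx in ij.
by rewrite subrr.
Qed.

Lemma bessel A x : `|P A x| <= `|x|.
Proof.
have /(pythagoras hV) := ip_sub_proj_sum A x; rewrite subrK => e.
by rewrite -ler_sqr ?nnegrE // e lerDr exprn_ge0.
Qed.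

Definition expansion_set := [set x | has_sum (fun i => Q i x) x].

(* An e/3 argument: partial sums are 1-Lipschitz by Bessel's inequality. *)
Lemma closed_expansion_set : closed expansion_set.
Proof.
rewrite closure_id; apply/seteqP; split; first exact: subset_closure.
move=> x clx; apply/cvgrPdist_lt => e e0.
have e3 : 0 < e / 3 by rewrite divr_gt0.
have [g [Gg /=]] := clx _ (nbhsx_ballx x _ e3).
rewrite -ball_normE /= => xg.
near=> A.
have -> : x - P A x = (x - g) + (g - P A g) + P A (g - x).
  by rewrite proj_sumB !addrA subrK subrK.
have gPg : `|g - P A g| < e / 3 by near: A; apply: cvgr_dist_lt.
have Pgx : `|P A (g - x)| < e / 3 by apply: le_lt_trans (bessel _ _) _; rewrite distrC.
rewrite (le_lt_trans (ler_normD _ _)) // (le_lt_trans (lerD (ler_normD _ _) (lexx _))) //.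
have -> : e = e / 3 + e / 3 + e / 3 by field.
by do 2?apply: ltrD.
Unshelve. all: by end_near. Qed.

Lemma closed_subspace_expansion_set : closed_subspace expansion_set.
Proof.
split; rewrite /expansion_set /has_sum /=.
- have -> : partial_sum (fun i => Q i 0) = fun=> 0 by apply/funext => A; rewrite proj_sum0.
  exact: cvg_cst.
- move=> x y Gx Gy; have -> : partial_sum (fun i => Q i (x + y)) =
      partial_sum (fun i => Q i x) + partial_sum (fun i => Q i y).
    by apply/funext => A; rewrite proj_sumD.
  exact: cvgD.
- move=> c x Gx; have -> : partial_sum (fun i => Q i (c *: x)) =
      c \*: partial_sum (fun i => Q i x).
    by apply/funext => A; rewrite proj_sumZ.
  exact: cvgZr.
- exact: closed_expansion_set.
Qed.

End OrthogonalExpansion.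

Section Basis.
Variable R : realType.
Local Notation C := R[i].
Variables (H : completeNormedModType C) (ipH : H -> H -> C).
Hypothesis hH : is_inner_product ipH.
Variables (I : choiceType) (a : I -> H).
Hypothesis ha : orthonormal_basis ipH a.

Lemma basis_ipxx i : ipH (a i) (a i) = 1.
Proof. by case: ha. Qed.

Lemma basis_orth i j : i <> j -> ipH (a i) (a j) = 0.
Proof. by case: ha => _ + _; apply. Qed.

Lemma norm_basis i : `|a i| = 1.
Proof.
by apply: (pexpIrn (isT : 0 < 2)%N); rewrite ?nnegrE // -(ip_normE hH) basis_ipxx expr1n.
Qed.

Definition basis_proj i h := ipH h (a i) *: a i.

Lemma basis_expansion h : has_sum (fun i => basis_proj i h) h.
Proof.
have projDZ i c x y : basis_proj i (c *: x + y) = c *: basis_proj i x + basis_proj i y.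
  by rewrite /basis_proj (ipDZl hH) scalerDl scalerA.
have proj_orth i j x y : i <> j -> ipH (basis_proj i x) (basis_proj j y) = 0.
  by move=> ij; rewrite (ipZl hH) (ipZr hH) basis_orth // !mulr0.
have proj_proj j x y : ipH x (basis_proj j y) = ipH (basis_proj j x) (basis_proj j y).
  by rewrite (ipZl hH) !(ipZr hH) basis_ipxx mulr1 mulrC.
have hG := closed_subspace_expansion_set hH projDZ proj_orth proj_proj.
suff : clspan (range a) `<=` expansion_set basis_proj.
  by case: ha => _ _ -> /(_ h Logic.I).
apply: clspan_min => // _ [j _ <-].
rewrite /expansion_set /= -[X in has_sum _ X]scale1r -(basis_ipxx j).
by apply: has_sum_single => i ij; rewrite /basis_proj basis_orth ?scale0r // => /esym.
Qed.

Lemma basis_ip_eq0 h : (forall i, ipH h (a i) = 0) -> h = 0.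
Proof.
move=> h0; have := @basis_expansion h; rewrite /has_sum.
have -> : partial_sum (basis_proj^~ h) = fun=> 0.
  by apply/funext => A; rewrite /partial_sum big1 // => i _; rewrite /basis_proj h0 scale0r.
by move=> h_lim; apply: (cvg_unique (@norm_hausdorff _ H) h_lim (cvg_cst 0)).
Qed.

End Basis.
Arguments basis_expansion {R H ipH} hH {I a} ha h.

Section Tensor.
Variable R : realType.
Local Notation C := R[i].
Variables (H K T : completeNormedModType C)
  (ipH : H -> H -> C) (ipK : K -> K -> C) (ipT : T -> T -> C)
  (tens : H -> K -> T).
Hypotheses (hH : is_inner_product ipH) (hK : is_inner_product ipK)
  (hT : is_tensor_product ipH ipK ipT tens).
Variables (I : choiceType) (a : I -> H).
Hypothesis ha : orthonormal_basis ipH a.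

Lemma tensor_inner_product : is_inner_product ipT. Proof. by case: hT. Qed.

Lemma tensDZl b c x y : tens (c *: x + y) b = c *: tens x b + tens y b.
Proof. by case: hT => _ + _ _ _; apply. Qed.

Lemma tensDZr x c b d : tens x (c *: b + d) = c *: tens x b + tens x d.
Proof. by case: hT => _ _ + _ _; apply. Qed.

Lemma tens_ip x b y d : ipT (tens x b) (tens y d) = ipH x y * ipK b d.
Proof. by case: hT => _ _ _ + _; apply. Qed.

Lemma tens_span : clspan [set t | exists x b, t = tens x b] = setT.
Proof. by case: hT. Qed.

Lemma tensDl b x y : tens (x + y) b = tens x b + tens y b.
Proof. by rewrite -[x]scale1r tensDZl !scale1r. Qed.

Lemma tensDr x b d : tens x (b + d) = tens x b + tens x d.
Proof. by rewrite -[b]scale1r tensDZr !scale1r. Qed.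

Lemma tens0l b : tens 0 b = 0.
Proof. exact: (morph_add0 (tensDl b)). Qed.

Lemma tensZl b c x : tens (c *: x) b = c *: tens x b.
Proof. by rewrite -[c *: x]addr0 tensDZl tens0l addr0. Qed.

Lemma tensZr x c b : tens x (c *: b) = c *: tens x b.
Proof. by rewrite -[c *: b]addr0 tensDZr (morph_add0 (tensDr x)) addr0. Qed.

Lemma tensBl b x y : tens (x - y) b = tens x b - tens y b.
Proof. by rewrite tensDl -scaleN1r tensZl scaleN1r. Qed.

Lemma tens_suml (J : Type) (r : seq J) (P : pred J) (F : J -> H) b :
  tens (\sum_(j <- r | P j) F j) b = \sum_(j <- r | P j) tens (F j) b.
Proof. exact: (big_morph (tens^~ b) (tensDl b) (tens0l b)). Qed.

Lemma norm_tens x b : `|tens x b| = `|x| * `|b|.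
Proof.
apply: (pexpIrn (isT : 0 < 2)%N); rewrite ?nnegrE ?mulr_ge0 //.
by rewrite -(ip_normE tensor_inner_product) tens_ip (ip_normE hH) (ip_normE hK) exprMn.
Qed.

Lemma tensl_continuous b : continuous (tens^~ b).
Proof.
apply: (lipschitz_continuous (c := `|b|)) => // x y.
by rewrite -tensBl norm_tens mulrC.
Qed.

(* [coef i t] defaults to 0 when t has no representative; [coefP] shows that
   this never happens. *)
Definition is_coef i (t : T) (y : K) := forall k, ipK y k = ipT t (tens (a i) k).
Definition coef_dom i := [set t | exists y, is_coef i t y].
Definition coef i t := xget 0 (is_coef i t).

Lemma coef_domP i t : coef_dom i t -> is_coef i t (coef i t).
Proof. by move=> [y ty]; rewrite /coef; case: xgetP => // /(_ y). Qed.

Lemma is_coef_lipschitz i t1 t2 y1 y2 : is_coef i t1 y1 -> is_coef i t2 y2 ->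
  `|y1 - y2| <= `|t1 - t2|.
Proof.
move=> ty1 ty2; have [->|y12] := eqVneq (y1 - y2) 0; first by rewrite normr0.
have ny12 : 0 < `|y1 - y2| by rewrite normr_gt0.
rewrite -(ler_pM2r ny12) -expr2 -(ip_normE hK).
rewrite -[ipK _ _]ger0_norm; last by rewrite (ip_normE hK) exprn_ge0.
rewrite (ipBl hK) ty1 ty2 -(ipBl tensor_inner_product).
by rewrite (le_trans (cauchy_schwarz tensor_inner_product _ _)) // norm_tens (norm_basis hH ha) mul1r.
Qed.

Lemma coef_dom_cauchy i u :
  closure (coef_dom i) u -> cauchy (coef i @ within (coef_dom i) (nbhs u)).
Proof.
move=> clu; apply/cauchyP => e e0.
have e2 : 0 < e / 2 by rewrite divr_gt0.
have [u0 [Du0 /=]] := clu _ (nbhsx_ballx u _ e2); rewrite -ball_normE /= => uu0.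
exists (coef i u0); apply: filterS (nbhsx_ballx u _ e2) => t /=.
rewrite -!ball_normE /= => ut Dt.
apply: le_lt_trans (is_coef_lipschitz (coef_domP Du0) (coef_domP Dt)) _.
have -> : u0 - t = (u0 - u) + (u - t) by rewrite addrA subrK.
rewrite (le_lt_trans (ler_normD _ _)) // [e]splitr.
by apply: ltrD; rewrite // distrC.
Qed.

Lemma closed_coef_dom i : closed (coef_dom i).
Proof.
rewrite closure_id; apply/seteqP; split; first exact: subset_closure.
move=> u clu; set F := within (coef_dom i) (nbhs u).
have FF : ProperFilter F by apply: within_nbhs_proper.
have PF : ProperFilter (coef i @ F) by apply: fmap_proper_filter.
have coef_cvg : coef i @ F --> lim (coef i @ F).
  by apply: cauchy_cvg; apply: coef_dom_cauchy.
exists (lim (coef i @ F)) => k.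
have lhs_cvg : (fun t => ipK (coef i t) k) @ F --> ipK (lim (coef i @ F)) k.
  exact: continuous_cvg _ (ipl_continuous hK k _) coef_cvg.
have rhs_cvg : (fun t => ipT t (tens (a i) k)) @ F --> ipT u (tens (a i) k).
  apply: continuous_cvg _ (ipl_continuous tensor_inner_product _ u) _.
  exact: cvg_within.
have coefF : {near F, (fun t => ipT t (tens (a i) k)) =1 (fun t => ipK (coef i t) k)}.
  by apply: (@filterE _ (nbhs u)) => t Dt; rewrite (coef_domP Dt).
have coef_rhs_cvg : (fun t => ipK (coef i t) k) @ F --> ipT u (tens (a i) k).
  by apply: cvg_trans rhs_cvg; apply: near_eq_cvg coefF.
exact: (cvg_unique (@norm_hausdorff _ C) lhs_cvg coef_rhs_cvg).
Qed.

Lemma closed_subspace_coef_dom i : closed_subspace (coef_dom i).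
Proof.
split; last exact: closed_coef_dom.
- by exists 0 => k; rewrite (ip0l hK) (ip0l tensor_inner_product).
- by move=> x y [y1 h1] [y2 h2]; exists (y1 + y2) => k;
    rewrite (ipDl hK) (ipDl tensor_inner_product) h1 h2.
- by move=> c x [y1 h1]; exists (c *: y1) => k; rewrite (ipZl hK) (ipZl tensor_inner_product) h1.
Qed.

Lemma coefP i t k : ipK (coef i t) k = ipT t (tens (a i) k).
Proof.
suff : clspan [set t | exists x b, t = tens x b] `<=` coef_dom i.
  by rewrite tens_span => /(_ t Logic.I) /coef_domP.
apply: clspan_min; first exact: closed_subspace_coef_dom.
move=> _ [x [b ->]]; exists (ipH x (a i) *: b) => k'.
by rewrite (ipZl hK) tens_ip.
Qed.

Lemma coefDZ i c t s : coef i (c *: t + s) = c *: coef i t + coef i s.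
Proof.
by apply: (ip_injl hK) => k; rewrite coefP (ipDZl tensor_inner_product) (ipDZl hK) !coefP.
Qed.

Lemma coefD i t s : coef i (t + s) = coef i t + coef i s.
Proof. by rewrite -[t]scale1r coefDZ !scale1r. Qed.

Lemma coef0 i : coef i 0 = 0.
Proof. exact: (morph_add0 (coefD i)). Qed.

Lemma coefZ i c t : coef i (c *: t) = c *: coef i t.
Proof. by rewrite -[c *: t]addr0 coefDZ coef0 addr0. Qed.

Lemma coef_tens i x b : coef i (tens x b) = ipH x (a i) *: b.
Proof. by apply: (ip_injl hK) => k; rewrite coefP (ipZl hK) tens_ip. Qed.

Lemma coef_continuous i : continuous (coef i).
Proof.
apply: (lipschitz_continuous (c := 1)) => // x y; rewrite mul1r.
by apply: is_coef_lipschitz => k; rewrite coefP.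
Qed.

Lemma tensor_expansion t : coeffs tens a t (coef^~ t).
Proof.
pose Q i t := tens (a i) (coef i t).
have QDZ i c x y : Q i (c *: x + y) = c *: Q i x + Q i y by rewrite /Q coefDZ tensDZr.
have Q_orth i j x y : i <> j -> ipT (Q i x) (Q j y) = 0.
  by move=> ij; rewrite tens_ip (basis_orth ha) // mul0r.
have Q_proj j x y : ipT x (Q j y) = ipT (Q j x) (Q j y).
  by rewrite tens_ip (basis_ipxx ha) mul1r coefP.
have hG := closed_subspace_expansion_set tensor_inner_product QDZ Q_orth Q_proj.
suff : clspan [set t | exists x b, t = tens x b] `<=` expansion_set Q.
  by rewrite tens_span => /(_ t Logic.I).
apply: clspan_min => // _ [x [b ->]]; rewrite /expansion_set /has_sum /=.
have -> : partial_sum (fun i => Q i (tens x b)) =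
    tens^~ b \o partial_sum (fun i => basis_proj ipH a i x).
  apply: funext => A /=; rewrite /partial_sum tens_suml.
  by apply: eq_bigr => i _; rewrite /Q coef_tens tensZr tensZl.
exact: continuous_cvg _ (@tensl_continuous b x) (basis_expansion hH ha x).
Qed.

Lemma coeffs_coef v w : coeffs tens a v w -> forall i, w i = coef i v.
Proof.
move=> vw i; apply: (ip_injl hK) => k; rewrite coefP.
set g := ipT^~ (tens (a i) k).
have g_sum : g \o partial_sum (fun j => tens (a j) (w j)) =
    partial_sum (fun j => g (tens (a j) (w j))).
  by apply/funext => A; rewrite /g /= /partial_sum (ip_suml tensor_inner_product).
have : has_sum (fun j => g (tens (a j) (w j))) (g (tens (a i) (w i))).
  by apply: has_sum_single => j ji; rewrite /g tens_ip (basis_orth ha) // mul0r.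
rewrite /has_sum -g_sum {2}/g tens_ip (basis_ipxx ha) mul1r => g_cvg.
exact: (cvg_unique (@norm_hausdorff _ C) g_cvg
  (continuous_cvg _ (ipl_continuous tensor_inner_product _ v) vw)).
Qed.

Lemma tensS_tens (B : set K) x b : B b -> tensS tens setT B (tens x b).
Proof. by move=> Bb; apply: sub_clspan; exists x, b. Qed.

Lemma coef_tensS (B : set K) : closed_subspace B ->
  forall v, tensS tens setT B v -> forall i, B (coef i v).
Proof.
move=> hB v Bv i; case: (hB) => B0 BD BZ clB.
have hM : closed_subspace [set t | B (coef i t)].
  split=> [|x y|c x|] /=; rewrite ?coef0 ?coefD ?coefZ //; [exact: BD|exact: BZ|].
  exact: (continuous_closedP (coef i)).1 (@coef_continuous i) B clB.
apply: (clspan_min hM _ Bv) => _ [x [b [_ Bb ->]]] /=.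
by rewrite coef_tens; apply: BZ.
Qed.

Lemma tensS_coef (B : set K) : closed_subspace B ->
  forall v, (forall i, B (coef i v)) -> tensS tens setT B v.
Proof.
move=> hB v Bv; have [_ _ _ cl] := closed_subspace_clspan
  [set t | exists x b, [/\ [set: H] x, B b & t = tens x b]].
apply: (closed_cvg _ cl _ _ (@tensor_expansion v)).
apply: filterE => A; apply: closed_subspace_sum; first exact: closed_subspace_clspan.
by move=> j _; apply: tensS_tens.
Qed.

Lemma existsH_tensS_supH (S : set T) :
  existsH tens S = tensS tens setT (supH tens a S).
Proof.
have supH_closed : closed_subspace (supH tens a S).
  exact: closed_subspace_clspan.
apply/seteqP; split=> [t St|t tS E [[B [hB ->]] SE]].
- apply: St; split; first by exists (supH tens a S).
  move=> v Sv; apply: tensS_coef => // i; apply: sub_clspan.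
  by exists v, (coef^~ v), i; split => //; apply: tensor_expansion.
- have SB : supH tens a S `<=` B.
    apply: clspan_min => // _ [v [w [i [Sv vw ->]]]].
    by rewrite (coeffs_coef vw i); apply: coef_tensS => //; apply: SE.
  by apply: (clspan_mono _ tS) => _ [x [b [_ Bb ->]]]; exists x, b; split => //; apply: SB.
Qed.

Lemma tensS_subset_inj (B1 B2 : set K) : (exists x : H, x <> 0) ->
  closed_subspace B2 -> tensS tens setT B1 `<=` tensS tens setT B2 -> B1 `<=` B2.
Proof.
move=> [h h0] hB2 B12 b B1b.
have [i hai] : exists i, ipH h (a i) != 0.
  apply: contrapT => nai; apply: h0; apply: (basis_ip_eq0 hH ha) => i.
  by apply/eqP; apply: contrapT => hi; apply: nai; exists i; apply/negP.
have := coef_tensS hB2 (B12 _ (tensS_tens h B1b)) i.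
rewrite coef_tens; case: hB2 => _ _ BZ _ /(BZ (ipH h (a i))^-1).
by rewrite scalerA mulVf // scale1r.
Qed.

End Tensor.

Theorem mainTheorem11 (R : realType)
  (H K T : completeNormedModType R[i])
  (ipH : H -> H -> R[i]) (ipK : K -> K -> R[i]) (ipT : T -> T -> R[i])
  (tens : H -> K -> T)
  (hH : is_inner_product ipH) (hK : is_inner_product ipK)
  (hT : is_tensor_product ipH ipK ipT tens)
  (H_nonzero : exists x : H, x <> 0)
  (I : choiceType) (a : I -> H) (ha : orthonormal_basis ipH a)
  (S : set T) (hS : closed_subspace S) :
  existsH tens S = tensS tens setT (supH tens a S) /\
  (forall (J : choiceType) (a' : J -> H), orthonormal_basis ipH a' ->
     supH tens a' S = supH tens a S).
Proof.
split; first exact: (existsH_tensS_supH hH hK hT ha).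
move=> J a' ha'.
have e := existsH_tensS_supH hH hK hT ha S.
have e' := existsH_tensS_supH hH hK hT ha' S.
by apply/seteqP; split; apply: (tensS_subset_inj hH hK hT ha H_nonzero);
  first [exact: closed_subspace_clspan | rewrite -e -e'].
Qed.
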